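(* For each $X\in\{\mathrm{B_{ii}},\mathrm{B_{vi}},\mathrm{H_{ii}},\mathrm{H_{iii}}\}$, let $G_X$ be the group with generators $a,b,c$ and relations $\mathrm{B_{ii}}$: $ababab=bababa,\ bc=ab,\ ac=ca$; $\mathrm{B_{vi}}$: $aba=bab,\ aca=bac,\ acaca=cacac$; $\mathrm{H_{ii}}$: $abab=baba,\ aca=bac,\ acaca=cacac$; $\mathrm{H_{iii}}$: $aba=bab,\ bcba=cbac,\ cba=acb$; and let $G_X^+$ be the submonoid generated by $a,b,c$. If $\Delta\in G_X^+$ is quasi-central with associated permutation $\sigma$ of $\{a,b,c\}$, i.e. $x\Delta=\Delta\sigma(x)$ for all $x\in\{a,b,c\}$, then $\sigma$ is the identity. That is, $\sigma(\mathcal{QZ}(G_X^+))$ consists only of the identity.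
   Context: For a monoid generated by $\{a,b,c\}$ (with no two generators equal, as here), an element $\Delta$ is quasi-central if there is a permutation $\sigma_\Delta$ of $\{a,b,c\}$ with $x\Delta=\Delta\sigma_\Delta(x)$ for all generators $x$; $\mathcal{QZ}$ denotes the set of quasi-central elements. *)

From Stdlib Require Import List Bool.
Import ListNotations.

Inductive gen := ga | gb | gc.

(* a letter of the free group: generator with a flag (true = inverse) *)
Definition letter := (gen * bool)%type.
Definition word := list letter.

Definition pos (w : list gen) : word := map (fun x => (x, false)) w.

Inductive pres := B_ii | B_vi | H_ii | H_iii.

Definition relations (X : pres) : list (list gen * list gen) :=
  match X with
  | B_ii  => [ ([ga;gb;ga;gb;ga;gb], [gb;ga;gb;ga;gb;ga]);
               ([gb;gc], [ga;gb]);
               ([ga;gc], [gc;ga]) ]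
  | B_vi  => [ ([ga;gb;ga], [gb;ga;gb]);
               ([ga;gc;ga], [gb;ga;gc]);
               ([ga;gc;ga;gc;ga], [gc;ga;gc;ga;gc]) ]
  | H_ii  => [ ([ga;gb;ga;gb], [gb;ga;gb;ga]);
               ([ga;gc;ga], [gb;ga;gc]);
               ([ga;gc;ga;gc;ga], [gc;ga;gc;ga;gc]) ]
  | H_iii => [ ([ga;gb;ga], [gb;ga;gb]);
               ([gb;gc;gb;ga], [gc;gb;ga;gc]);
               ([gc;gb;ga], [ga;gc;gb]) ]
  end.

(* Equality in the group G_X: the congruence on words generated by the
   defining relations and free cancellation. *)
Inductive geq (X : pres) : word -> word -> Prop :=
| geq_rel : forall u v, In (u, v) (relations X) -> geq X (pos u) (pos v)
| geq_cancel : forall (x : gen) (e : bool), geq X [(x, e); (x, negb e)] []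
| geq_refl : forall u, geq X u u
| geq_sym : forall u v, geq X u v -> geq X v u
| geq_trans : forall u v w, geq X u v -> geq X v w -> geq X u w
| geq_cat : forall u u' v v', geq X u u' -> geq X v v' -> geq X (u ++ v) (u' ++ v').

(* Delta (an element of G_X^+, represented by the positive word d) is
   quasi-central with associated permutation sigma. *)
Definition quasi_central_with (X : pres) (d : list gen) (sigma : gen -> gen) : Prop :=
  (forall x y, sigma x = sigma y -> x = y) /\
  (forall x : gen, geq X (pos (x :: d)) (pos (d ++ [sigma x]))).

(* Let ρ : G_X -> Sym(T) be a permutation representation and g := ρ(Δ), with
   G_X acting on the right.  The relations x Δ = Δ σ(x) give t·w·Δ = t·Δ·σ(w)
   for every positive word w, so g carries fixed points of ρ(w) to fixed
   points of ρ(σ(w)).  Hence σ = id as soon as, for each non-identity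
   permutation σ of {a, b, c}, some word w has ρ(w) with a fixed point and
   ρ(σ(w)) without one.  Each of the four groups has a permutation
   representation of degree 4 or 5 with this property, with separating words
   of length at most 5. *)

From Stdlib Require Import List.
Import ListNotations.

Definition gen_perm (x y z : gen) (g : gen) : gen :=
  match g with ga => x | gb => y | gc => z end.

Definition nontrivial_gen_perms : list (gen -> gen) :=
  [gen_perm ga gc gb; gen_perm gb ga gc; gen_perm gb gc ga;
   gen_perm gc ga gb; gen_perm gc gb ga].

Lemma injective_gen_cases (sigma : gen -> gen) :
  (forall x y, sigma x = sigma y -> x = y) ->
  (forall x, sigma x = x) \/
  exists2 p, In p nontrivial_gen_perms & forall x, sigma x = p x.
Proof.
  intros Hinj.
  assert (Ha : sigma ga <> sigma gb) by (intros E; discriminate (Hinj _ _ E)).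
  assert (Hb : sigma ga <> sigma gc) by (intros E; discriminate (Hinj _ _ E)).
  assert (Hc : sigma gb <> sigma gc) by (intros E; discriminate (Hinj _ _ E)).
  destruct (sigma ga) eqn:Sa, (sigma gb) eqn:Sb, (sigma gc) eqn:Sc;
    try congruence;
    [ left; intros []; assumption
    | right; exists (gen_perm (sigma ga) (sigma gb) (sigma gc));
      [ rewrite Sa, Sb, Sc; simpl; tauto | intros []; reflexivity ] .. ].
Qed.

Fixpoint words_upto (n : nat) : list (list gen) :=
  match n with
  | 0 => [[]]
  | S n => [] :: flat_map (fun w => [ga :: w; gb :: w; gc :: w]) (words_upto n)
  end.

Section PermutationRepresentation.

Variable T : Type.
Variable enum : list T.
Hypothesis enum_complete : forall t, In t enum.
Variable eq_dec : forall t u : T, {t = u} + {t <> u}.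

(* A genuine inverse only for bijective [f]; [letter_action_cancel] below
   checks this for each concrete representation. *)
Definition inverse (f : T -> T) (y : T) : T :=
  match find (fun x => if eq_dec (f x) y then true else false) enum with
  | Some x => x
  | None => y
  end.

Definition has_fixed_point (f : T -> T) : bool :=
  existsb (fun t => if eq_dec (f t) t then true else false) enum.

Lemma has_fixed_point_spec (f : T -> T) :
  has_fixed_point f = true <-> exists t, f t = t.
Proof.
  unfold has_fixed_point; rewrite existsb_exists; split.
  - intros [t [_ Ht]]; exists t; destruct (eq_dec (f t) t); congruence.
  - intros [t Ht]; exists t; split; [apply enum_complete|].
    destruct (eq_dec (f t) t); congruence.
Qed.

Variable rep : gen -> T -> T.

Definition letter_action (l : letter) : T -> T :=
  let (x, inv) := l in if inv then inverse (rep x) else rep x.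

(* Letters act on the right: [act (u ++ v) = act v ∘ act u]. *)
Definition act (w : word) (t : T) : T :=
  fold_left (fun t l => letter_action l t) w t.

Lemma act_app (u v : word) (t : T) : act (u ++ v) t = act v (act u t).
Proof. apply fold_left_app. Qed.

Variable X : pres.
Hypothesis letter_action_cancel :
  forall x e t, letter_action (x, negb e) (letter_action (x, e) t) = t.
Hypothesis act_relations :
  forall u v, In (u, v) (relations X) -> forall t, act (pos u) t = act (pos v) t.

Lemma act_geq (u v : word) : geq X u v -> forall t, act u t = act v t.
Proof.
  induction 1; intros t.
  - auto.
  - apply letter_action_cancel.
  - reflexivity.
  - symmetry; auto.
  - congruence.
  - rewrite !act_app, IHgeq1, IHgeq2; reflexivity.
Qed.

Section QuasiCentral.

Variables (d : list gen) (sigma : gen -> gen).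
Hypothesis d_quasi_central : quasi_central_with X d sigma.

Lemma act_quasi_central (w : list gen) (t : T) :
  act (pos d) (act (pos w) t) = act (pos (map sigma w)) (act (pos d) t).
Proof.
  revert t; induction w as [|x w IH]; intros t; [reflexivity|].
  simpl; rewrite IH; f_equal.
  destruct d_quasi_central as [_ Hx].
  generalize (act_geq _ _ (Hx x) t); unfold pos; rewrite map_app, act_app.
  auto.
Qed.

Lemma quasi_central_has_fixed_point (w : list gen) :
  has_fixed_point (act (pos w)) = true ->
  has_fixed_point (act (pos (map sigma w))) = true.
Proof.
  rewrite !has_fixed_point_spec; intros [t Ht].
  exists (act (pos d) t); rewrite <- act_quasi_central, Ht; reflexivity.
Qed.

End QuasiCentral.

Definition separates (p : gen -> gen) (w : list gen) : bool :=
  has_fixed_point (act (pos w)) && negb (has_fixed_point (act (pos (map p w)))).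

Definition separated_by_words (n : nat) : bool :=
  forallb (fun p => existsb (separates p) (words_upto n)) nontrivial_gen_perms.

Theorem separated_quasi_central_trivial (n : nat) (d : list gen) (sigma : gen -> gen) :
  separated_by_words n = true -> quasi_central_with X d sigma ->
  forall x, sigma x = x.
Proof.
  intros Hsep Hq.
  destruct (injective_gen_cases sigma (proj1 Hq)) as [Hid | [p Hp Hsigma]];
    [assumption | exfalso].
  unfold separated_by_words in Hsep; rewrite forallb_forall in Hsep.
  destruct (proj1 (existsb_exists _ _) (Hsep p Hp)) as [w [_ Hw]].
  unfold separates in Hw; apply andb_prop in Hw as [Hfix Hnofix].
  rewrite (map_ext _ _ (fun x => eq_sym (Hsigma x))) in Hnofix.
  rewrite (quasi_central_has_fixed_point d sigma Hq w Hfix) in Hnofix.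
  discriminate.
Qed.

End PermutationRepresentation.

Inductive pt4 := p0 | p1 | p2 | p3.
Definition pt4_enum : list pt4 := [p0; p1; p2; p3].
Lemma pt4_enum_complete (t : pt4) : In t pt4_enum.
Proof. destruct t; simpl; tauto. Qed.
Definition pt4_eq_dec (t u : pt4) : {t = u} + {t <> u}.
Proof. decide equality. Defined.

Inductive pt5 := q0 | q1 | q2 | q3 | q4.
Definition pt5_enum : list pt5 := [q0; q1; q2; q3; q4].
Lemma pt5_enum_complete (t : pt5) : In t pt5_enum.
Proof. destruct t; simpl; tauto. Qed.
Definition pt5_eq_dec (t u : pt5) : {t = u} + {t <> u}.
Proof. decide equality. Defined.

(* a = (0 1)(2 3), b = (1 2 3), c = (0 2)(1 3) *)
Definition rep_B_ii (x : gen) (t : pt4) : pt4 :=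
  match x, t with
  | ga, p0 => p1 | ga, p1 => p0 | ga, p2 => p3 | ga, p3 => p2
  | gb, p0 => p0 | gb, p1 => p2 | gb, p2 => p3 | gb, p3 => p1
  | gc, p0 => p2 | gc, p1 => p3 | gc, p2 => p0 | gc, p3 => p1
  end.

(* a = (0 1 2 3 4), b = (0 2 4 3 1), c = (0 1 4 2 3) *)
Definition rep_B_vi (x : gen) (t : pt5) : pt5 :=
  match x, t with
  | ga, q0 => q1 | ga, q1 => q2 | ga, q2 => q3 | ga, q3 => q4 | ga, q4 => q0
  | gb, q0 => q2 | gb, q1 => q0 | gb, q2 => q4 | gb, q3 => q1 | gb, q4 => q3
  | gc, q0 => q1 | gc, q1 => q4 | gc, q2 => q3 | gc, q3 => q0 | gc, q4 => q2
  end.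

(* a = (2 3 4), b = (1 2 3), c = (0 1 2) *)
Definition rep_H_ii (x : gen) (t : pt5) : pt5 :=
  match x, t with
  | ga, q0 => q0 | ga, q1 => q1 | ga, q2 => q3 | ga, q3 => q4 | ga, q4 => q2
  | gb, q0 => q0 | gb, q1 => q2 | gb, q2 => q3 | gb, q3 => q1 | gb, q4 => q4
  | gc, q0 => q1 | gc, q1 => q2 | gc, q2 => q0 | gc, q3 => q3 | gc, q4 => q4
  end.

(* a = (0 1 2 3 4), b = (0 2 4 3 1), c = (0 3 2 4 1) *)
Definition rep_H_iii (x : gen) (t : pt5) : pt5 :=
  match x, t with
  | ga, q0 => q1 | ga, q1 => q2 | ga, q2 => q3 | ga, q3 => q4 | ga, q4 => q0
  | gb, q0 => q2 | gb, q1 => q0 | gb, q2 => q4 | gb, q3 => q1 | gb, q4 => q3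
  | gc, q0 => q3 | gc, q1 => q0 | gc, q2 => q4 | gc, q3 => q2 | gc, q4 => q1
  end.

Ltac check_relations :=
  intros u v Huv; simpl in Huv;
  repeat destruct Huv as [Huv | Huv]; try contradiction;
  injection Huv as <- <-; intros []; reflexivity.

Lemma quasi_central_trivial_B_ii (d : list gen) (sigma : gen -> gen) :
  quasi_central_with B_ii d sigma -> forall x, sigma x = x.
Proof.
  apply (separated_quasi_central_trivial pt4 pt4_enum pt4_enum_complete pt4_eq_dec
           rep_B_ii B_ii) with (n := 5).
  - intros [] [] []; reflexivity.
  - check_relations.
  - reflexivity.
Qed.

Lemma quasi_central_trivial_B_vi (d : list gen) (sigma : gen -> gen) :
  quasi_central_with B_vi d sigma -> forall x, sigma x = x.
Proof.
  apply (separated_quasi_central_trivial pt5 pt5_enum pt5_enum_complete pt5_eq_dec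
           rep_B_vi B_vi) with (n := 5).
  - intros [] [] []; reflexivity.
  - check_relations.
  - reflexivity.
Qed.

Lemma quasi_central_trivial_H_ii (d : list gen) (sigma : gen -> gen) :
  quasi_central_with H_ii d sigma -> forall x, sigma x = x.
Proof.
  apply (separated_quasi_central_trivial pt5 pt5_enum pt5_enum_complete pt5_eq_dec
           rep_H_ii H_ii) with (n := 5).
  - intros [] [] []; reflexivity.
  - check_relations.
  - reflexivity.
Qed.

Lemma quasi_central_trivial_H_iii (d : list gen) (sigma : gen -> gen) :
  quasi_central_with H_iii d sigma -> forall x, sigma x = x.
Proof.
  apply (separated_quasi_central_trivial pt5 pt5_enum pt5_enum_complete pt5_eq_dec
           rep_H_iii H_iii) with (n := 5).
  - intros [] [] []; reflexivity.
  - check_relations.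
  - reflexivity.
Qed.

Theorem mainTheorem10 :
  forall (X : pres) (d : list gen) (sigma : gen -> gen),
    quasi_central_with X d sigma -> forall x : gen, sigma x = x.
Proof.
  intros [] d sigma.
  - apply quasi_central_trivial_B_ii.
  - apply quasi_central_trivial_B_vi.
  - apply quasi_central_trivial_H_ii.
  - apply quasi_central_trivial_H_iii.
Qed.
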